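(* Let $M=\Gamma\backslash\mathbf{H}^3$ be a non-compact hyperbolic $3$-manifold, $C$ the maximal representative of a cusp of $M$, and suppose (after conjugating $\Gamma$) that two tangent horoballs of the preimage of $C$ in $\mathbf{H}^3$ are centered at $0$ and $\infty$, denoted $B_0$ and $B_\infty=\{x_3>h\}$ with $h>0$. If $\gamma\in\Gamma$ is a loxodromic element with $\gamma(B_0)=B_\infty$, and $b=\gamma(\infty)\in\mathbf{C}$, then $$2\cosh(\ell_\gamma/2)\;\le\;\frac{\sqrt{4h^2+|b|^2}}{h},$$ where $\ell_\gamma$ is the translation length of $\gamma$.
   Context: Hyperbolic manifolds are complete, of constant curvature $-1$, of finite volume, possibly non-orientable; $\Gamma\subset\mathsf{Isom}(\mathbf{H}^3)$ is discrete torsion-free. We use the upper half-space model $\mathbf{H}^3=\{x_1+x_2i+x_3j:\ x_3>0\}$ with boundary $\mathbf{C}\cup\{\infty\}$. For $x\in\partial\mathbf{H}^3$, $\Gamma_x$ is its stabilizer in $\Gamma$. A cusp region is $\Gamma_x\backslash B$, with $B$ an open horoball centered at a parabolic fixed point $x$ such that no element of $\Gamma\setminus\Gamma_x$ identifies two points of $B$; a cusp is an equivalence class of cusp regions under ''one contains the other'', and its maximal representative is the union of its members. The preimage of the maximal representative in $\mathbf{H}^3$ is a $\Gamma$-invariant family of horoballs with disjoint interiors, some of which are tangent. *)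

From HB Require Import structures.
From mathcomp Require Import all_boot all_order all_algebra.
From mathcomp Require Import all_classical all_reals all_analysis.
Set Implicit Arguments. Unset Strict Implicit. Unset Printing Implicit Defensive.
Import Order.TTheory GRing.Theory Num.Theory.
Import numFieldNormedType.Exports.
Local Open Scope classical_set_scope.
Local Open Scope ring_scope.

Record H3 (R : realType) := mkH3 { hx : R; hy : R; hz : R; hz_gt0 : 0 < hz }.

(* boundary points: None = infinity, Some (c1,c2) = c1 + c2 i in C *)
Definition bdpt (R : realType) := option (R * R).

Definition cosh (R : realType) (x : R) : R := (expR x + expR (- x)) / 2.
Definition acosh (R : realType) (u : R) : R := ln (u + Num.sqrt (u ^+ 2 - 1)).

Definition esq (R : realType) (x y : H3 R) : R :=
  (hx x - hx y) ^+ 2 + (hy x - hy y) ^+ 2 + (hz x - hz y) ^+ 2.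
Definition hdist (R : realType) (x y : H3 R) : R :=
  acosh (1 + esq x y / (2 * hz x * hz y)).

Definition isometry (R : realType) (g : H3 R -> H3 R) : Prop :=
  bijective g /\ forall x y, hdist (g x) (g y) = hdist x y.

Definition ray (R : realType) (xi : bdpt R) (t : R) : H3 R :=
  match xi with
  | None => @mkH3 R 0 0 (expR t) (expR_gt0 t)
  | Some c => @mkH3 R c.1 c.2 (expR (- t)) (expR_gt0 (- t))
  end.

(* bd_ext g xi eta : the continuous extension of g to the boundary maps xi to
   eta, i.e. the image of a geodesic ray ending at xi converges to eta. *)
Definition bd_ext (R : realType) (g : H3 R -> H3 R) (xi eta : bdpt R) : Prop :=
  match eta with
  | None => (fun t => hx (g (ray xi t)) ^+ 2 + hy (g (ray xi t)) ^+ 2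
                      + hz (g (ray xi t)) ^+ 2) @ +oo --> +oo
  | Some c => [/\ (fun t => hx (g (ray xi t))) @ +oo --> c.1,
                  (fun t => hy (g (ray xi t))) @ +oo --> c.2 &
                  (fun t => hz (g (ray xi t))) @ +oo --> (0 : R)]
  end.

Definition fixes_bd (R : realType) (g : H3 R -> H3 R) (xi : bdpt R) : Prop :=
  bd_ext g xi xi.

Definition no_interior_fixpoint (R : realType) (g : H3 R -> H3 R) : Prop :=
  forall x, g x <> x.

Definition parabolic (R : realType) (g : H3 R -> H3 R) : Prop :=
  isometry g /\ no_interior_fixpoint g /\
  exists xi, fixes_bd g xi /\ forall eta, fixes_bd g eta -> eta = xi.

Definition loxodromic (R : realType) (g : H3 R -> H3 R) : Prop :=
  isometry g /\ no_interior_fixpoint g /\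
  exists xi eta, xi <> eta /\ fixes_bd g xi /\ fixes_bd g eta /\
    forall zeta, fixes_bd g zeta -> zeta = xi \/ zeta = eta.

Definition transl_length (R : realType) (g : H3 R -> H3 R) : R :=
  inf [set hdist x (g x) | x in [set: H3 R]].

Definition isom_group (R : realType) (G : set (H3 R -> H3 R)) : Prop :=
  [/\ (forall g, G g -> isometry g), G id,
      (forall g h, G g -> G h -> G (g \o h)) &
      (forall g, G g -> exists2 h, G h & cancel g h /\ cancel h g)].

(* discreteness, in the form of proper discontinuity of the action *)
Definition discrete_group (R : realType) (G : set (H3 R -> H3 R)) : Prop :=
  forall (x : H3 R) (r : R), finite_set [set g | G g /\ hdist x (g x) <= r].

Definition torsion_free (R : realType) (G : set (H3 R -> H3 R)) : Prop :=
  forall g, G g -> forall n : nat, (0 < n)%N -> iter n (fun h => g \o h) id = id -> g = id.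

(* hyperbolic volume measure dx1 dx2 dx3 / x3^3 *)
Definition emb (R : realType) (x : H3 R) : R * R * R := (hx x, hy x, hz x).
Definition leb3 (R : realType) :=
  ((@lebesgue_measure R \x @lebesgue_measure R) \x @lebesgue_measure R)%E.

(* the quotient G \ H^3 has finite volume: there is a measurable strict
   fundamental set of finite hyperbolic volume *)
Definition finite_covolume (R : realType) (G : set (H3 R -> H3 R)) : Prop :=
  exists F : set (H3 R),
    [/\ measurable (@emb R @` F),
        (forall x, exists2 g, G g & F (g x)),
        (forall y z g, F y -> F z -> G g -> g y = z -> y = z) &
        (\int[@leb3 R]_(p in @emb R @` F) ((p.2 ^+ 3)^-1)%:E < +oo)%E].

(* the quotient G \ H^3 is compact iff translates of some hyperbolic ball cover *)
Definition cocompact (R : realType) (G : set (H3 R -> H3 R)) : Prop :=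
  exists (x0 : H3 R) (r : R), forall y, exists2 g, G g & hdist x0 (g y) <= r.

(* open horoballs: at infinity {x3 > s}; at c in C the open Euclidean ball of
   diameter s tangent to C at c *)
Definition horoball (R : realType) (xi : bdpt R) (s : R) : set (H3 R) :=
  match xi with
  | None => [set x | s < hz x]
  | Some c => [set x | (hx x - c.1) ^+ 2 + (hy x - c.2) ^+ 2 + (hz x - s / 2) ^+ 2
                         < (s / 2) ^+ 2]
  end.

Definition is_horoball_at (R : realType) (B : set (H3 R)) (xi : bdpt R) : Prop :=
  exists2 s : R, 0 < s & B = horoball xi s.

Definition stabilizer (R : realType) (G : set (H3 R -> H3 R)) (xi : bdpt R) :=
  [set g | G g /\ fixes_bd g xi].

Definition parabolic_fixed_point (R : realType) (G : set (H3 R -> H3 R))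
  (xi : bdpt R) : Prop := exists2 g, G g & parabolic g /\ fixes_bd g xi.

(* B projects to a cusp region: no element of G \ G_xi identifies two points of B *)
Definition precisely_invariant (R : realType) (G : set (H3 R -> H3 R))
  (xi : bdpt R) (B : set (H3 R)) : Prop :=
  forall g, G g -> ~ fixes_bd g xi -> forall x y, B x -> B y -> g x <> y.

(* preimage in H^3 of the maximal representative of the cusp at xi: the union
   of all horoballs at xi giving cusp regions, and its G-translates *)
Definition max_cusp_ball (R : realType) (G : set (H3 R -> H3 R)) (xi : bdpt R)
  : set (H3 R) :=
  \bigcup_(B in [set B | is_horoball_at B xi /\ precisely_invariant G xi B]) B.

Definition cusp_horoballs (R : realType) (G : set (H3 R -> H3 R)) (xi : bdpt R)
  : set (set (H3 R)) :=
  [set g @` max_cusp_ball G xi | g in G].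

From HB Require Import structures.
From mathcomp Require Import all_boot all_order all_algebra.
From mathcomp Require Import all_classical all_reals all_analysis.
From mathcomp Require Import ring lra.
Set Implicit Arguments. Unset Strict Implicit. Unset Printing Implicit Defensive.
Import Order.TTheory GRing.Theory Num.Theory.
Import numFieldNormedType.Exports.
Local Open Scope classical_set_scope.
Local Open Scope ring_scope.

(* Put r(x, y) = |x - y|^2 / (x_3 y_3), so that cosh d(x, y) = 1 + r(x, y) / 2 and r is
   preserved by every isometry.  Let T = (0, 0, h) be the point where B_0 touches B_oo
   and P = (0, 0, h/2) the Euclidean centre of B_0; then r(P, T) = 1/2, and every point
   outside B_0 has r(P, .) >= 1/2.  Since gamma maps B_0 onto B_oo, gamma(P) lies at a
   height z > h, the point of the horosphere x_3 = h just below it is the image of a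
   point outside B_0, and this forces z >= 2h; the point gamma(T) lies outside B_oo,
   at height u <= h.  The equation r(gamma P, gamma T) = 1/2 then only allows z = 2h,
   u = h with gamma(T) directly below gamma(P).  Knowing the images of two points of the
   geodesic from 0 to oo pins down the image of the whole geodesic: it is the vertical
   line over gamma(T), so b = gamma(oo) is the foot of that line.  Finally
   l_gamma <= d(T, gamma T), and 2 cosh (d(T, gamma T) / 2) = sqrt (4 h^2 + |b|^2) / h. *)

Section HyperbolicCosine.
Variable R : realType.
Implicit Types x y u : R.

Lemma cosh_gt0 x : 0 < cosh x.
Proof. by rewrite /cosh divr_gt0 // addr_gt0 // expR_gt0. Qed.

Lemma cosh_acosh u : 1 <= u -> cosh (acosh u) = u.
Proof.
move=> u1; rewrite /cosh /acosh.
have s2 : Num.sqrt (u ^+ 2 - 1) ^+ 2 = u ^+ 2 - 1 by rewrite sqr_sqrtr //; nra.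
have s0 := sqrtr_ge0 (u ^+ 2 - 1).
set s := Num.sqrt _ in s2 s0 *.
have us_gt0 : 0 < u + s by lra.
rewrite expRN lnK ?posrE //.
have -> : (u + s)^-1 = u - s.
  by apply: (mulfI (lt0r_neq0 us_gt0)); rewrite mulfV ?lt0r_neq0 //; nra.
by field.
Qed.

Lemma acosh_ge0 u : 1 <= u -> 0 <= acosh u.
Proof. by move=> u1; apply: ln_ge0; have := sqrtr_ge0 (u ^+ 2 - 1); lra. Qed.

Lemma ler_cosh x y : 0 <= x -> x <= y -> cosh x <= cosh y.
Proof.
move=> x0 xy; rewrite /cosh !expRN ler_pM2r // -subr_ge0.
have a1 : 1 <= expR x by rewrite -expR0 ler_expR.
have ab : expR x <= expR y by rewrite ler_expR.
set a := expR x in a1 ab *; set b := expR y in ab *.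
have -> : b + b^-1 - (a + a^-1) = (b - a) * (a * b - 1) / (a * b) by field; lra.
by rewrite divr_ge0 ?mulr_ge0 //; nra.
Qed.

Lemma cosh_double x : cosh (2 * x) = 2 * cosh x ^+ 2 - 1.
Proof.
have -> : 2 * x = x + x by ring.
rewrite /cosh opprD !expRD !expRN.
by have := expR_gt0 x; move=> ?; field; lra.
Qed.

Lemma two_cosh_half_acosh u :
  1 <= u -> 2 * cosh (acosh u / 2) = Num.sqrt (2 * (u + 1)).
Proof.
move=> u1; set c := cosh _.
have c2 : 2 * (u + 1) = (2 * c) ^+ 2.
  have : cosh (acosh u) = 2 * c ^+ 2 - 1 by rewrite -cosh_double; congr cosh; field.
  by rewrite cosh_acosh // => ->; ring.
by rewrite c2 sqrtr_sqr ger0_norm // mulr_ge0 // ltW // cosh_gt0.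
Qed.

End HyperbolicCosine.

Section UpperHalfSpace.
Variable R : realType.
Implicit Types x y : H3 R.

Definition hratio x y : R := esq x y / (hz x * hz y).

Lemma esq_ge0 x y : 0 <= esq x y.
Proof. by rewrite /esq !addr_ge0 ?sqr_ge0. Qed.

Lemma hratio_ge0 x y : 0 <= hratio x y.
Proof. by rewrite /hratio divr_ge0 ?esq_ge0 ?mulr_ge0 ?ltW ?hz_gt0. Qed.

Lemma hratio_vertical x y : hx x = hx y -> hy x = hy y ->
  hratio x y = (hz x - hz y) ^+ 2 / (hz x * hz y).
Proof. by rewrite /hratio /esq => -> ->; rewrite !subrr expr0n /= !add0r. Qed.

Lemma hdistE x y : hdist x y = acosh (1 + hratio x y / 2).
Proof.
rewrite /hdist /hratio; congr (acosh (1 + _)).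
by have := hz_gt0 x; have := hz_gt0 y; move=> *; field; apply/andP; split; lra.
Qed.

Lemma one_le_hratio x y : 1 <= 1 + hratio x y / 2.
Proof. by rewrite lerDl divr_ge0 ?hratio_ge0. Qed.

Lemma hdist_ge0 x y : 0 <= hdist x y.
Proof. by rewrite hdistE acosh_ge0 ?one_le_hratio. Qed.

Lemma cosh_hdist x y : cosh (hdist x y) = 1 + hratio x y / 2.
Proof. by rewrite hdistE cosh_acosh ?one_le_hratio. Qed.

Lemma hratio_hdist x y x' y' : hdist x y = hdist x' y' -> hratio x y = hratio x' y'.
Proof.
move=> /(congr1 (@cosh R)); rewrite !cosh_hdist => /addrI /eqP.
by rewrite (inj_eq (mulIf _)) // => /eqP.
Qed.

End UpperHalfSpace.

Lemma hratio_center_notin_horoball (R : realType) (c : R * R) (s : R)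
    (s2_gt0 : 0 < s / 2) (x : H3 R) :
  ~ horoball (Some c) s x -> 1 / 2 <= hratio (mkH3 c.1 c.2 s2_gt0) x.
Proof.
have s0 : 0 < s by lra.
move=> /negP; rewrite /= -leNgt /hratio /esq /= => notin.
have z0 := hz_gt0 x; rewrite ler_pdivlMr ?mulr_gt0 //.
have -> : (s / 2 - hz x) ^+ 2 = (hz x - s / 2) ^+ 2 by ring.
have := sqr_ge0 (hx x - c.1); have := sqr_ge0 (hy x - c.2).
by case: (lerP (hz x) s) => zs; nra.
Qed.

Lemma transl_length_le (R : realType) (g : H3 R -> H3 R) (x : H3 R) :
  transl_length g <= hdist x (g x).
Proof.
apply: ge_inf; last by exists x.
by exists 0 => _ [y _ <-]; exact: hdist_ge0.
Qed.

Lemma transl_length_ge0 (R : realType) (g : H3 R -> H3 R) : 0 <= transl_length g.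
Proof.
pose o := mkH3 0 0 (@ltr01 R).
apply: lb_le_inf; first by exists (hdist o (g o)), o.
by move=> _ [y _ <-]; exact: hdist_ge0.
Qed.

Section HoroballSwap.
Variables (R : realType) (h : R) (g : H3 R -> H3 R).
Hypothesis h_gt0 : 0 < h.
Hypothesis g_bij : bijective g.
Hypothesis g_hdist : forall x y, hdist (g x) (g y) = hdist x y.
Hypothesis g_horoball : g @` horoball (Some (0, 0)) h = horoball None h.

Local Notation h2_gt0 := (divr_gt0 h_gt0 (ltr0Sn R 1)).
Local Notation T := (mkH3 0 0 h_gt0).
Local Notation P := (mkH3 0 0 h2_gt0).

Lemma hratio_image x y : hratio (g x) (g y) = hratio x y.
Proof. exact/hratio_hdist/g_hdist. Qed.

Lemma hz_image_top_le : hz (g T) <= h.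
Proof.
rewrite leNgt; apply/negP => gT_in; change (horoball None h (g T)) in gT_in.
move: gT_in; rewrite -g_horoball => -[x x_in /(bij_inj g_bij) xT]; move: x_in.
by rewrite xT /= !subr0 expr0n /= !add0r; apply/negP; rewrite -leNgt; nra.
Qed.

Lemma hz_image_center_gt : h < hz (g P).
Proof.
change (horoball None h (g P)); rewrite -g_horoball; exists P => //=.
by rewrite !subrr expr0n /= !add0r exprn_gt0 ?divr_gt0.
Qed.

Lemma hz_image_center_ge : 2 * h <= hz (g P).
Proof.
have h0 := h_gt0.
have z_gt := hz_image_center_gt; set z := hz (g P) in z_gt *.
pose W := mkH3 (hx (g P)) (hy (g P)) h_gt0.
have [f _ fK] := g_bij.
have w_notin : ~ horoball (Some (0, 0)) h (f W).
  move=> w_in; have : horoball None h (g (f W)) by rewrite -g_horoball; exists (f W).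
  by rewrite fK /=; lra.
have : 1 / 2 <= hratio P (f W) := hratio_center_notin_horoball h2_gt0 w_notin.
rewrite -hratio_image fK hratio_vertical //= -/z ler_pdivlMr ?mulr_gt0 //; last lra.
move=> ratio; have : 0 <= (2 * z - h) * (z - 2 * h) by nra.
by rewrite pmulr_rge0; lra.
Qed.

Lemma image_top_center :
  [/\ hz (g T) = h, hz (g P) = 2 * h, hx (g T) = hx (g P) & hy (g T) = hy (g P)].
Proof.
have h0 := h_gt0.
have u_le := hz_image_top_le; have z_ge := hz_image_center_ge.
have u_gt0 := hz_gt0 (g T).
have : esq (g P) (g T) = 1 / 2 * (hz (g P) * hz (g T)).
  apply: (canRL (divfK _)); first by rewrite mulf_neq0 ?lt0r_neq0 ?hz_gt0.
  by rewrite -/(hratio _ _) hratio_image hratio_vertical //=; field; lra.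
rewrite /esq.
set u := hz (g T) in u_le u_gt0 *; set z := hz (g P) in z_ge *.
set X := (hx (g P) - hx (g T)) ^+ 2; set Y := (hy (g P) - hy (g T)) ^+ 2.
move=> ratio.
have X0 : 0 <= X := sqr_ge0 _; have Y0 : 0 <= Y := sqr_ge0 _.
have vert : 0 <= (2 * z - u) * (z - 2 * u) by rewrite mulr_ge0 //; lra.
have [XY0 z2u] : X + Y = 0 /\ z = 2 * u.
  split; first lra.
  have : (2 * z - u) * (z - 2 * u) = 0 by nra.
  by move/eqP; rewrite mulf_eq0 => /orP[] /eqP; lra.
move/eqP: XY0; rewrite paddr_eq0 // !sqrf_eq0 !subr_eq0 => /andP[/eqP-> /eqP->].
by split => //; lra.
Qed.

Lemma image_vertical_axis y : hx y = 0 -> hy y = 0 ->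
  hx (g y) = hx (g T) /\ hy (g y) = hy (g T).
Proof.
move=> y1 y2; have h0 := h_gt0; have [uh zh xTP yTP] := image_top_center.
have E0 := hz_gt0 y; have v0 := hz_gt0 (g y).
have eT : hratio (g y) (g T) = hratio y T := hratio_image _ _.
have eP : hratio (g y) (g P) = hratio y P := hratio_image _ _.
move: eT eP; rewrite /hratio /esq /= y1 y2 -xTP -yTP uh zh !subrr expr0n /= !add0r.
set E := hz y; set v := hz (g y).
set w := _ + (hy (g y) - hy (g T)) ^+ 2.
have w0 : 0 <= w by rewrite addr_ge0 ?sqr_ge0.
move=> /eqP; rewrite eqr_div ?mulf_neq0 ?lt0r_neq0 // => /eqP eT.
move=> /eqP; rewrite eqr_div ?mulf_neq0 ?lt0r_neq0 ?divr_gt0 // => /eqP eP.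
have eT' : (w + (v - h) ^+ 2) * E = (E - h) ^+ 2 * v.
  by apply: (mulIf (lt0r_neq0 h0)); rewrite -mulrA eT; ring.
have eP' : (w + (v - 2 * h) ^+ 2) * E = (2 * E - h) ^+ 2 * v.
  by apply: (mulIf (lt0r_neq0 (divr_gt0 h0 (ltr0Sn R 1)))); rewrite -mulrA eP; field.
(* On the axis, g acts as the inversion E |-> h^2 / E. *)
have vE : v * E = h ^+ 2.
  have : E * (3 * (v * E)) = E * (3 * h ^+ 2) by lra.
  by move/(mulfI (lt0r_neq0 E0)); lra.
have : w * (E * E) = 0.
  have -> : w * (E * E) = ((w + (v - h) ^+ 2) * E) * E - (v * E - h * E) ^+ 2 by ring.
  by rewrite eT' -mulrA vE; ring.
move/eqP; rewrite mulf_eq0 mulf_eq0 (negbTE (lt0r_neq0 E0)) !orbF.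
by rewrite paddr_eq0 ?sqr_ge0 // !sqrf_eq0 !subr_eq0 => /andP[/eqP-> /eqP->].
Qed.

Lemma bd_ext_inf_image b : bd_ext g None (Some b) -> b = (hx (g T), hy (g T)).
Proof.
case: b => b1 b2 [/= cx cy _].
have ray_axis t := @image_vertical_axis (ray None t) erefl erefl.
have ex : (fun t => hx (g (ray None t))) = fun=> hx (g T).
  by apply/funext => t; case: (ray_axis t).
have ey : (fun t => hy (g (ray None t))) = fun=> hy (g T).
  by apply/funext => t; case: (ray_axis t).
rewrite ex in cx; rewrite ey in cy.
by rewrite (cvg_unique (@Rhausdorff R) cx (cvg_cst _))
           (cvg_unique (@Rhausdorff R) cy (cvg_cst _)).
Qed.

Lemma cosh_half_hdist_top_image :
  2 * cosh (hdist T (g T) / 2)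
  = Num.sqrt (4 * h ^+ 2 + (hx (g T) ^+ 2 + hy (g T) ^+ 2)) / h.
Proof.
have h0 := h_gt0; have [uh _ _ _] := image_top_center.
rewrite hdistE two_cosh_half_acosh ?one_le_hratio // /hratio /esq /= uh.
have -> : 2 * (1 + ((0 - hx (g T)) ^+ 2 + (0 - hy (g T)) ^+ 2 + (h - h) ^+ 2) / (h * h) / 2 + 1)
    = (4 * h ^+ 2 + (hx (g T) ^+ 2 + hy (g T) ^+ 2)) * h^-1 ^+ 2 by field; lra.
rewrite sqrtrM; first by rewrite sqrtr_sqr ger0_norm // invr_ge0 ltW.
by rewrite !addr_ge0 ?sqr_ge0 // mulr_ge0 ?sqr_ge0.
Qed.

End HoroballSwap.

Theorem lemma5 (R : realType) (G : set (H3 R -> H3 R))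
  (HG : isom_group G) (Hdisc : discrete_group G) (Htf : torsion_free G)
  (Hvol : finite_covolume G) (Hnc : ~ cocompact G)
  (xi : bdpt R) (Hxi : parabolic_fixed_point G xi)
  (h : R) (h_gt0 : 0 < h)
  (Binf : cusp_horoballs G xi (horoball None h))
  (B0 : cusp_horoballs G xi (horoball (Some (0, 0)) h))
  (gamma : H3 R -> H3 R) (Hgamma : G gamma) (Hlox : loxodromic gamma)
  (HgB : gamma @` horoball (Some (0, 0)) h = horoball None h)
  (b : R * R) (Hb : bd_ext gamma None (Some b)) :
  2 * cosh (transl_length gamma / 2)
    <= Num.sqrt (4 * h ^+ 2 + (b.1 ^+ 2 + b.2 ^+ 2)) / h.
Proof.
have [[g_bij g_hdist] _] := Hlox.
rewrite (bd_ext_inf_image h_gt0 g_bij g_hdist HgB Hb) /=.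
rewrite -(cosh_half_hdist_top_image h_gt0 g_bij g_hdist HgB) ler_pM2l //.
rewrite ler_cosh ?divr_ge0 ?transl_length_ge0 // ler_pM2r ?invr_gt0 //.
exact: transl_length_le.
Qed.
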